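(* For each $\lambda\in\Lambda$, the operator $R^\varpi_\lambda$ on $\mathcal{V}_\Lambda$ defined by $R^\varpi_\lambda e_\eta=\varpi(\eta,\lambda)e_{\lambda+\eta}$ satisfies $\mathbb{M}_i(R^\varpi_\lambda)>-\infty$ for $i=1,2$.
   Context: Let $\mathbb{K}$ be a real quadratic field with real embeddings $\iota_1,\iota_2$ and Galois involution $c:x\mapsto x'$; let $\theta\in\mathbb{K}$ be a quadratic irrationality and $\Lambda=\{(n+m\theta,n+m\theta'):n,m\in\mathbb{Z}\}$. Let $\omega\in\mathbb{K}^*$ with $\omega\omega'=1$, and $\varpi(\lambda,\eta)=\omega^{(n,m)\wedge(r,k)}$ for $\lambda=(n+m\theta,n+m\theta')$, $\eta=(r+k\theta,r+k\theta')$, where $(a,b)\wedge(c,d)=ad-bc$. Let $\mathcal{V}_\Lambda$ be the $\mathbb{K}$-vector space with basis $\{e_\lambda\}_{\lambda\in\Lambda}$ with the pairing $(v,w)=\sum_\lambda c(a_\lambda)b_\lambda$ for $v=\sum a_\lambda e_\lambda$, $w=\sum b_\lambda e_\lambda$. For a $\mathbb{K}$-linear operator $T$ on $\mathcal{V}_\Lambda$, $\mathbb{M}_i(T):=\inf_{(v,v)=1}\iota_i((Tv,Tv))\in[-\infty,\infty)$. *)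

From HB Require Import structures.
From mathcomp Require Import all_boot all_order all_algebra.
From mathcomp Require Import finmap.
From mathcomp Require Import all_classical all_reals ereal.
Set Implicit Arguments. Unset Strict Implicit. Unset Printing Implicit Defensive.
Import Order.TTheory GRing.Theory Num.Theory.
Local Open Scope ring_scope.

(* The lattice Lambda = {(n + m theta, n + m theta') : n, m in Z} is indexed by
   its coordinates (n, m) in Z^2 (a bijection since theta is irrational).  *)
Definition LamIdx := (int * int)%type.

Definition lam_add (l e : LamIdx) : LamIdx := (l.1 + e.1, l.2 + e.2).
Definition lam_sub (l e : LamIdx) : LamIdx := (l.1 - e.1, l.2 - e.2).

Definition wedge (l e : LamIdx) : int := l.1 * e.2 - l.2 * e.1.

Definition varpi (K : fieldType) (omega : K) (l e : LamIdx) : K :=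
  omega ^ (wedge l e).

(* V_Lambda : finitely supported families (a_lambda) = sum a_lambda e_lambda *)
Definition VLam (K : fieldType) := fsfun (fun _ : LamIdx => (0 : K)).

Definition ebasis (K : fieldType) (l : LamIdx) : VLam K :=
  [fsfun x in [fset l]%fset => (1 : K) | 0].

Definition pairing (K : fieldType) (c : K -> K) (v w : VLam K) : K :=
  \sum_(l <- fsetU (finsupp v) (finsupp w)) c (v l) * w l.

(* R^varpi_lambda e_eta = varpi(eta, lambda) e_(lambda + eta), extended linearly *)
Definition Rop (K : fieldType) (omega : K) (l : LamIdx) (v : VLam K) : VLam K :=
  [fsfun x in [fset lam_add l e | e in finsupp v]%fset =>
     varpi omega (lam_sub x l) l * v (lam_sub x l) | 0].

Definition Mbound (K : fieldType) (R : realType) (c : K -> K) (iota : K -> R)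
  (T : VLam K -> VLam K) : \bar R :=
  ereal_inf [set ((iota (pairing c (T v) (T v)))%:E)%E
            | v in [set v : VLam K | pairing c v v = 1]]%classic.

From HB Require Import structures.
From mathcomp Require Import all_boot all_order all_algebra.
From mathcomp Require Import finmap.
From mathcomp Require Import all_classical all_reals ereal.
Import Order.TTheory GRing.Theory Num.Theory.
Local Open Scope ring_scope.

(* R^varpi_lambda is an isometry for the hermitian form: it permutes the basis
   and multiplies each coordinate by a power of omega, and omega omega' = 1
   makes every such power of norm one.  Hence (Tv,Tv) = 1 on the unit sphere,
   so M_i(R^varpi_lambda) >= 1 for every embedding iota_i. *)

Lemma lam_addKsub (l e : LamIdx) : lam_sub (lam_add l e) l = e.
Proof.
by case: l e => [a b] [x y]; rewrite /lam_sub /lam_add /= !(addrC a) !(addrC b) !addrK.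
Qed.

Lemma pairing_diag (K : fieldType) (c : K -> K) (v : VLam K) :
  pairing c v v = \sum_(x <- finsupp v) c (v x) * v x.
Proof. by rewrite /pairing fsetUid. Qed.

Lemma rmorph_expz_normr1 (K : fieldType) (c : {rmorphism K -> K}) (x : K) (z : int) :
  x * c x = 1 -> c (x ^ z) * x ^ z = 1.
Proof.
move=> hx; have ux : x \is a GRing.unit by apply/unitrPr; exists (c x).
by rewrite rmorphXz // -expfzMl mulrC hx exp1rz.
Qed.

Lemma pairing_Rop (K : fieldType) (c : {rmorphism K -> K}) (omega : K)
    (l : LamIdx) (v : VLam K) :
  omega * c omega = 1 ->
  pairing c (Rop omega l v) (Rop omega l v) = pairing c v v.
Proof.
move=> homega; rewrite !pairing_diag.
set S := [fset lam_add l e | e in finsupp v]%fset.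
have RopE x : Rop omega l v x =
    if x \in S then varpi omega (lam_sub x l) l * v (lam_sub x l) else 0.
  by rewrite /Rop fsfunE.
rewrite (big_fset_incl _ (B := S)); last 2 first.
- by apply/fsubsetP => x; rewrite mem_finsupp RopE; case: ifP; rewrite ?eqxx.
- by move=> x _ /fsfun_dflt ->; rewrite rmorph0 mul0r.
rewrite big_imfset /=; last first.
  by move=> a b _ _ /(congr1 (lam_sub^~ l)); rewrite !lam_addKsub.
apply: eq_big_seq => e he; rewrite RopE in_imfset //= lam_addKsub.
by rewrite rmorphM mulrACA rmorph_expz_normr1 // mul1r.
Qed.

Lemma Mbound_isometry_ge1 (K : fieldType) (R : realType) (c : K -> K)
    (iota : {rmorphism K -> R}) (T : VLam K -> VLam K) :
  (forall v, pairing c (T v) (T v) = pairing c v v) ->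
  (1%:E <= Mbound c iota T)%E.
Proof.
move=> hT; apply: le_ereal_inf_tmp => _ [v /= hv <-].
by rewrite hT hv rmorph1.
Qed.

Theorem lemma8p11 (R : realType) (K : fieldType)
  (c : {rmorphism K -> K}) (iota1 iota2 : {rmorphism K -> R}) (theta omega : K)
  (* c is an involution, not the identity (the Galois involution) *)
  (hc_inv : forall x : K, c (c x) = x)
  (hc_nid : exists x : K, c x != x)
  (* the two real embeddings *)
  (hiota : forall x : K, iota2 x = iota1 (c x))
  (* theta is irrational and K = Q(theta), so K is a real quadratic field *)
  (htheta_irr : forall q : rat, theta != ratr q)
  (hK : forall x : K, exists a b : rat, x = ratr a + ratr b * theta)
  (* omega in K^*, omega omega' = 1 *)
  (homega0 : omega != 0) (homega : omega * c omega = 1)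
  (l : LamIdx) :
  (-oo < Mbound c iota1 (Rop omega l))%E /\ (-oo < Mbound c iota2 (Rop omega l))%E.
Proof.
have Mbound_gtNy (iota : {rmorphism K -> R}) : (-oo < Mbound c iota (Rop omega l))%E.
  apply: (lt_le_trans (ltNyr 1)); apply: Mbound_isometry_ge1 => v.
  exact: pairing_Rop.
by split; apply: Mbound_gtNy.
Qed.
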